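(* Let $G$ be a countable group, $\preceq$ a left-invariant total order on $G$, and $x\in G$ a central element which is dominant for $\preceq$. Let $(\phi,t)$ be a dynamical realization of $\preceq$ adapted to $x$. Then $T_{(G,\preceq,\rho_x)}=T_{\mathbb{R}}\circ\phi$.
   Context: $x$ is dominant for $\preceq$ if right multiplication $\rho_x(g)=gx$ is dominant: for all $a,b\in G$ there is $n\in\mathbb{N}$ with $ax^n\succ b$. $T_{(G,\preceq,\rho_x)}(g):=\lim_{n\to\infty}\frac1n h_T(g^n,e)$, where $h_T(a,b)=\inf\{m\in\mathbb{Z}: bx^m\succeq a\}$. A dynamical realization of $\preceq$ is a pair $(\phi,t)$ of an injective homomorphism $\phi:G\to{\rm Homeo}^+(\mathbb{R})$ and an injective map $t:G\to\mathbb{R}$ with $t(gh)=\phi(g)(t(h))$, $t(e)=0$, $\inf_g t(g)=-\infty$, $\sup_g t(g)=\infty$, and $f\prec g\Leftrightarrow \phi(f)(0)<\phi(g)(0)$. It is adapted to $x$ if $\phi(x)$ is the translation $s\mapsto s+1$; then $\phi(G)\subset{\rm Homeo}^+_{\mathbb{Z}}(\mathbb{R})$ (homeomorphisms commuting with $s\mapsto s+1$). $T_{\mathbb{R}}(\psi)=\lim_n\psi^n(0)/n$ is the translation number on ${\rm Homeo}^+_{\mathbb{Z}}(\mathbb{R})$. *)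

From HB Require Import structures.
From mathcomp Require Import all_boot all_order all_algebra.
From mathcomp Require Import all_classical all_reals all_analysis.
Set Implicit Arguments. Unset Strict Implicit. Unset Printing Implicit Defensive.
Import Order.TTheory GRing.Theory Num.Theory.
Import numFieldNormedType.Exports.
Local Open Scope classical_set_scope.
Local Open Scope ring_scope.

Record group_str (G : Type) := GroupStr {
  gmul : G -> G -> G;
  gone : G;
  ginv : G -> G;
  gmulA : forall a b c, gmul a (gmul b c) = gmul (gmul a b) c;
  gmul1g : forall a, gmul gone a = a;
  gmulg1 : forall a, gmul a gone = a;
  gmulVg : forall a, gmul (ginv a) a = gone;
  gmulgV : forall a, gmul a (ginv a) = gone
}.

Definition countable_type (G : Type) : Prop :=
  exists f : G -> nat, injective f.

Fixpoint gpow G (Gr : group_str G) (g : G) (n : nat) : G :=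
  match n with
  | 0%N => gone Gr
  | n'.+1 => gmul Gr (gpow Gr g n') g
  end.

Definition gzpow G (Gr : group_str G) (g : G) (m : int) : G :=
  match m with
  | Posz n => gpow Gr g n
  | Negz n => ginv Gr (gpow Gr g n.+1)
  end.

Definition central G (Gr : group_str G) (x : G) : Prop :=
  forall g, gmul Gr g x = gmul Gr x g.

Definition left_inv_total_order G (Gr : group_str G) (le : G -> G -> Prop) : Prop :=
  [/\ (forall a, le a a),
      (forall a b, le a b -> le b a -> a = b),
      (forall a b c, le a b -> le b c -> le a c),
      (forall a b, le a b \/ le b a)
    & (forall g a b, le a b -> le (gmul Gr g a) (gmul Gr g b))].

Definition strict G (le : G -> G -> Prop) (a b : G) : Prop := le a b /\ a <> b.

Definition dominant G (Gr : group_str G) (le : G -> G -> Prop) (x : G) : Prop :=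
  forall a b, exists n : nat, strict le b (gmul Gr a (gpow Gr x n)).

Definition hT (R : realType) G (Gr : group_str G) (le : G -> G -> Prop) (x a b : G) : R :=
  inf [set (m%:~R : R) | m in [set m : int | le a (gmul Gr b (gzpow Gr x m))]].

Definition hT_seq (R : realType) G (Gr : group_str G) (le : G -> G -> Prop) (x g : G)
  : R^nat := fun n => hT R Gr le x (gpow Gr g n) (gone Gr) / n%:R.

(* T_{(G,⪯,rho_x)}(g) = lim_n h_T(g^n, e)/n *)
Definition T_G (R : realType) G (Gr : group_str G) (le : G -> G -> Prop) (x g : G) : R :=
  limn (hT_seq R Gr le x g).

(* translation number on Homeo_Z^+(R): lim_n psi^n(0)/n *)
Definition TR_seq (R : realType) (psi : R -> R) : R^nat :=
  fun n => iter n psi 0 / n%:R.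

Definition T_R (R : realType) (psi : R -> R) : R := limn (TR_seq psi).

Definition homeo_plus (R : realType) (f : R -> R) : Prop :=
  [/\ continuous f,
      (exists g : R -> R, [/\ cancel f g, cancel g f & continuous g])
    & (forall s u : R, s < u -> f s < f u)].

Definition dyn_realization (R : realType) G (Gr : group_str G) (le : G -> G -> Prop)
  (phi : G -> R -> R) (t : G -> R) : Prop :=
  (forall g, homeo_plus (phi g)) /\
  (forall g h, phi (gmul Gr g h) = phi g \o phi h) /\
  injective phi /\
  injective t /\
  (forall g h, t (gmul Gr g h) = phi g (t h)) /\
  t (gone Gr) = 0 /\
  (forall M : R, exists g, t g < M) /\
  (forall M : R, exists g, M < t g) /\
  (forall f g, strict le f g <-> phi f 0 < phi g 0).

Definition adapted_to (R : realType) G (phi : G -> R -> R) (x : G) : Prop :=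
  phi x = (fun s => s + 1).

(** Every [phi g] commutes with the unit translation [phi x], so [phi g] is a
    degree-one lift.  For such a lift [psi] the orbit [a n := psi^n(0)] is
    quasi-additive, [|a (m + n) - a m - a n| <= 1], hence [a n / n] is Cauchy and
    converges to the translation number.  On the group side, since [phi (x^m)] is
    translation by [m] and [f ⪯ g] iff [phi f 0 <= phi g 0], the set defining
    [h_T(g^n, e)] is [{m : int | a n <= m}], whose infimum lies in [[a n, a n + 1]].
    Dividing by [n], both sequences are [1/n]-close and share their limit. *)
From mathcomp Require Import all_boot all_order all_algebra.
From mathcomp Require Import all_classical all_reals all_analysis.
From mathcomp Require Import ring lra zify.
Set Implicit Arguments.
Import Order.TTheory GRing.Theory Num.Theory.
Import numFieldNormedType.Exports.
Local Open Scope classical_set_scope.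
Local Open Scope ring_scope.

Section DegreeOneLift.
Variable R : realType.

Lemma lift_addn {f : R -> R} : (forall s, f (s + 1) = f s + 1) ->
  forall (n : nat) s, f (s + n%:R) = f s + n%:R.
Proof.
move=> f_add1; elim=> [|n IHn] s; first by rewrite !addr0.
by rewrite -natr1 addrA f_add1 IHn addrA.
Qed.

Lemma lift_addz {f : R -> R} : (forall s, f (s + 1) = f s + 1) ->
  forall (z : int) s, f (s + z%:~R) = f s + z%:~R.
Proof.
move=> f_add1 [n|n] s; first exact: lift_addn.
rewrite NegzE mulrNz.
have := lift_addn f_add1 n.+1 (s - n.+1%:R); rewrite subrK => ->.
by rewrite addrK.
Qed.

Lemma lift_shift_dist (f : R -> R) :
  {homo f : s u / s <= u} -> (forall s, f (s + 1) = f s + 1) ->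
  forall s, `|f s - s - f 0| <= 1.
Proof.
move=> f_homo f_add1 s.
set z : R := (Num.floor s)%:~R; set r := s - z.
have [z_le_s s_lt_z1] : z <= s /\ s < z + 1.
  by have := floor_itv s; rewrite intrD => /andP[].
have -> : s = r + z by rewrite /r subrK.
rewrite lift_addz //.
have f0r : f 0 <= f r by apply: f_homo; rewrite /r subr_ge0.
have fr1 : f r <= f 0 + 1 by rewrite -f_add1 add0r; apply: f_homo; rewrite /r; lra.
rewrite ler_norml; apply/andP; split; rewrite /r; lra.
Qed.

Variable psi : R -> R.
Hypothesis psi_homo : {homo psi : s u / s <= u}.
Hypothesis psi_add1 : forall s, psi (s + 1) = psi s + 1.

Local Notation orbit n := (iter n psi 0).

Lemma iter_lift_homo k : {homo iter k psi : s u / s <= u}.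
Proof. by elim: k => [|k IHk] s u //= /IHk /psi_homo. Qed.

Lemma iter_lift_add1 k s : iter k psi (s + 1) = iter k psi s + 1.
Proof. by elim: k s => [|k IHk] s //=; rewrite IHk psi_add1. Qed.

Lemma orbit_quasi_additive m n : `|orbit (m + n) - orbit n - orbit m| <= 1.
Proof.
by rewrite iterD; apply: lift_shift_dist; [exact: iter_lift_homo|exact: iter_lift_add1].
Qed.

Lemma orbit_mul_dist j m : `|orbit (j * m) - j%:R * orbit m| <= j%:R.
Proof.
elim: j => [|j IHj]; first by rewrite mul0n mul0r subr0 normr0.
rewrite mulSnr addnC -natr1 mulrDl mul1r.
have -> : orbit (m + j * m) - (j%:R * orbit m + orbit m)
    = (orbit (m + j * m) - orbit (j * m) - orbit m) + (orbit (j * m) - j%:R * orbit m).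
  by ring.
apply: (le_trans (ler_normD _ _)); rewrite [leRHS]addrC.
exact: lerD (orbit_quasi_additive _ _) IHj.
Qed.

Lemma orbit_ratio_mul_dist j m : (0 < j)%N -> (0 < m)%N ->
  `|orbit (j * m) / (j * m)%:R - orbit m / m%:R| <= m%:R^-1.
Proof.
move=> j_gt0 m_gt0.
have jR_gt0 : 0 < j%:R :> R by rewrite ltr0n.
have mR_gt0 : 0 < m%:R :> R by rewrite ltr0n.
have -> : orbit (j * m) / (j * m)%:R - orbit m / m%:R
    = (orbit (j * m) - j%:R * orbit m) / (j%:R * m%:R).
  by rewrite natrM; field; rewrite ?mulf_neq0 ?gt_eqF.
have jm_ge0 : 0 <= j%:R * m%:R :> R by rewrite mulr_ge0 ?ler0n.
rewrite normrM normfV [`|_ * _|]ger0_norm //.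
rewrite ler_pdivrMr ?mulr_gt0 // mulrCA mulVf ?gt_eqF // mulr1.
exact: orbit_mul_dist.
Qed.

Lemma orbit_ratio_dist m n : (0 < m)%N -> (0 < n)%N ->
  `|orbit m / m%:R - orbit n / n%:R| <= m%:R^-1 + n%:R^-1.
Proof.
move=> m_gt0 n_gt0.
have dm := orbit_ratio_mul_dist n m n_gt0 m_gt0; rewrite mulnC in dm.
have dn := orbit_ratio_mul_dist m n m_gt0 n_gt0.
rewrite -[X in `|X|](subrKA (orbit (m * n) / (m * n)%:R)) addrC.
apply: (le_trans (ler_normD _ _)); rewrite addrC.
by apply: lerD; rewrite // distrC.
Qed.

Lemma translation_number_cvg : cvgn (TR_seq psi).
Proof.
apply: cauchy_cvg; apply/cauchy_exP => e e_gt0.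
pose N := (Num.Def.truncn (2 / e)).+1.
have N_gt : 2 / e < N%:R by apply: truncnS_gt.
have NR_gt0 : 0 < N%:R :> R by rewrite ltr0n.
exists (TR_seq psi N), N => // n /= le_Nn.
have n_gt0 : (0 < n)%N by apply: leq_trans le_Nn.
have inv_n : n%:R^-1 <= N%:R^-1 :> R by rewrite lef_pV2 ?ler_nat // posrE ltr0n.
have two_N : 2 / N%:R < e by rewrite ltr_pdivrMr // mulrC -ltr_pdivrMr.
apply: (le_lt_trans (orbit_ratio_dist N n isT n_gt0)).
by apply: le_lt_trans two_N; rewrite mulr_natl mulr2n lerD.
Qed.

End DegreeOneLift.

Lemma inf_int_ge (R : realType) (a : R) (P : int -> Prop) :
  (forall m, P m <-> a <= m%:~R) ->
  a <= inf [set (m%:~R : R) | m in P] <= a + 1.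
Proof.
move=> P_ge; set S := [set (m%:~R : R) | m in P].
have S_ceil : S (Num.ceil a)%:~R by exists (Num.ceil a) => //; apply/P_ge/ceil_ge.
have S_lb : lbound S a by move=> _ [m /P_ge ? <-].
apply/andP; split; first by apply: lb_le_inf => //; exists (Num.ceil a)%:~R.
apply: (le_trans (ge_inf _ S_ceil)); first by exists a.
by have := ceil_itv a; rewrite intrD => /andP[? _]; lra.
Qed.

Lemma cvgn_dist_invn (R : realType) (u v : R^nat) (l : R) :
  (forall n, (0 < n)%N -> `|u n - v n| <= n%:R^-1) ->
  v @ \oo --> l -> u @ \oo --> l.
Proof.
move=> uv_dist v_l.
have -> : u = v + (u - v) by apply/funext => n /=; rewrite addrC subrK.
rewrite -[l]addr0; apply: cvgD => //.
have harmonic2_0 : (fun n => 2 * harmonic n) @ \oo --> (0 : R).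
  by rewrite -(mulr0 2); exact: cvgMl_tmp cvg_harmonic.
have harmonic2N_0 : (fun n => - (2 * harmonic n)) @ \oo --> (0 : R).
  by rewrite -oppr0; exact: cvgN.
apply: (squeeze_cvgr _ harmonic2N_0 harmonic2_0).
exists 1%N => // n /= n_gt0.
have invn_le : n%:R^-1 <= 2 / n.+1%:R :> R.
  rewrite -div1r ler_pdivrMr ?ltr0n // mulrAC ler_pdivlMr ?ltr0n // mul1r.
  by rewrite -natrM ler_nat; lia.
by rewrite -ler_norml; exact: le_trans (uv_dist n n_gt0) invn_le.
Qed.

Section Realization.
Variables (R : realType) (G : Type) (Gr : group_str G) (le : G -> G -> Prop).
Variables (x : G) (phi : G -> R -> R) (t : G -> R).
Hypothesis le_refl : forall a, le a a.
Hypothesis realization : dyn_realization Gr le phi t.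
Hypothesis adapted : adapted_to phi x.

Lemma realization_increasing g : {homo phi g : s u / s < u}.
Proof. by case: realization => /(_ g)[]. Qed.

Lemma realization_mul g h s : phi (gmul Gr g h) s = phi g (phi h s).
Proof. by case: realization => _ [-> _]. Qed.

Lemma realization_one s : phi (gone Gr) s = s.
Proof.
apply: (inc_inj (le_mono (realization_increasing (gone Gr)))).
by rewrite -realization_mul gmul1g.
Qed.

Lemma realization_at0 a : t a = phi a 0.
Proof.
case: realization => _ [_ [_ [_ [t_mul [t_one _]]]]].
by rewrite -{1}[a](gmulg1 Gr) t_mul t_one.
Qed.

Lemma realization_le a c : le a c <-> phi a 0 <= phi c 0.
Proof.
case: realization => _ [_ [_ [t_inj [_ [_ [_ [_ lt_phi]]]]]]].
split=> [le_ac | ].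
  have [-> // | neq_ac] := eqVneq (phi a 0) (phi c 0).
  by apply/ltW/lt_phi; split => // eq_ac; rewrite eq_ac eqxx in neq_ac.
rewrite le_eqVlt => /orP[/eqP eq_ac | /lt_phi[] //].
by have -> : a = c by apply: t_inj; rewrite !realization_at0.
Qed.

Lemma realization_gpow g n s : phi (gpow Gr g n) s = iter n (phi g) s.
Proof.
by elim: n s => [|n IHn] s /=; rewrite ?realization_one // realization_mul IHn -iterSr.
Qed.

Lemma realization_gpow_adapted n s : phi (gpow Gr x n) s = s + n%:R.
Proof.
rewrite realization_gpow adapted.
by elim: n => [|n IHn] /=; rewrite ?addr0 // IHn -natr1 addrA.
Qed.

Lemma realization_gzpow_adapted m : phi (gzpow Gr x m) 0 = m%:~R.
Proof.
case: m => [n | n] /=; first by rewrite realization_gpow_adapted add0r.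
apply: (inc_inj (le_mono (realization_increasing (gpow Gr x n.+1)))).
by rewrite -realization_mul gmulgV realization_one realization_gpow_adapted NegzE mulrNz addNr.
Qed.

Lemma realization_central_add1 g : central Gr x ->
  forall s, phi g (s + 1) = phi g s + 1.
Proof.
move=> x_central s; have := realization_mul x g s.
by rewrite -x_central realization_mul adapted.
Qed.

Lemma hT_gpow_bounds g n :
  iter n (phi g) 0 <= hT R Gr le x (gpow Gr g n) (gone Gr) <= iter n (phi g) 0 + 1.
Proof.
apply: inf_int_ge => m /=.
by rewrite gmul1g realization_le realization_gzpow_adapted realization_gpow.
Qed.

Lemma hT_seq_TR_seq_dist g n : (0 < n)%N ->
  `|hT_seq R Gr le x g n - TR_seq (phi g) n| <= n%:R^-1.
Proof.
move=> n_gt0; have nR_gt0 : 0 < n%:R :> R by rewrite ltr0n.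
have nRV_ge0 : 0 <= n%:R^-1 :> R by rewrite invr_ge0 ler0n.
rewrite /hT_seq /TR_seq -mulrBl normrM [`|_^-1|]ger0_norm //.
rewrite ler_pdivrMr // mulVf ?gt_eqF // ler_norml.
by have /andP[? ?] := hT_gpow_bounds g n; apply/andP; split; lra.
Qed.

End Realization.

Theorem lemma4p11 (R : realType) (G : Type) (Gr : group_str G)
  (le : G -> G -> Prop) (x : G) (phi : G -> R -> R) (t : G -> R) :
  countable_type G ->
  left_inv_total_order Gr le ->
  central Gr x ->
  dominant Gr le x ->
  dyn_realization Gr le phi t ->
  adapted_to phi x ->
  forall g : G,
    [/\ cvgn (hT_seq R Gr le x g),
        cvgn (TR_seq (phi g))
      & T_G R Gr le x g = T_R (phi g)].
Proof.
move=> _ [le_refl _ _ _ _] x_central _ realization adapted g.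
have psi_homo := ltW_homo (realization_increasing realization g).
have psi_add1 := realization_central_add1 realization adapted g x_central.
have TR_cvg := translation_number_cvg psi_homo psi_add1.
have hT_TR : hT_seq R Gr le x g @ \oo --> T_R (phi g).
  apply: cvgn_dist_invn TR_cvg => n.
  exact: hT_seq_TR_seq_dist le_refl realization adapted g n.
by split=> //; [exact: cvgP hT_TR | exact: cvg_lim hT_TR].
Qed.
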